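(* Let $h>0$, $n\in\mathbb{N}$, and let $\lambda:\mathbb{T}\to\mathbb{R}$ be an $n$-cycle with values $\lambda_0,\dots,\lambda_{n-1}\in\mathbb{R}\setminus\{\pm\tfrac1h\}$, such that $0<|e_{\lambda}(nh)|\neq1$ and $0<|e_{-\lambda}(nh)|\neq1$. Let $f:\mathbb{T}\to\mathbb{R}$ be arbitrary. Then the non-homogeneous equation $$\Delta_h^2 y(t)+\bigl[\Delta_h\lambda(t)-\lambda(t)\lambda(t+h)\bigr]y(t)=f(t),\qquad t\in\mathbb{T},$$ has Hyers–Ulam stability on $\mathbb{T}$ with Hyers–Ulam stability constant $L=K_0(\lambda)K_0(-\lambda)$.
   Context: Fix $h>0$ and let $\mathbb{T}=\{0,h,2h,3h,\dots\}$. For $x:\mathbb{T}\to\mathbb{R}$, $\Delta_h x(t)=\frac{x(t+h)-x(t)}{h}$ and $\Delta_h^2x=\Delta_h(\Delta_h x)$, $\Delta_h^3x=\Delta_h(\Delta_h^2 x)$. An $n$-cycle is a function $\mu:\mathbb{T}\to\mathbb{R}$ with $\mu(t)=\mu_k$ whenever $t/h\equiv k\pmod n$, $k\in\{0,\dots,n-1\}$, which has period $n$ and no smaller period. For such $\mu$ define the discrete exponential $e_\mu(t)=\prod_{k=0}^{t/h-1}(1+h\mu(kh))$ (empty product $=1$), so $e_\mu(nh)=\prod_{k=0}^{n-1}(1+h\mu_k)$. For $k\in\{0,\dots,n-1\}$ define $$S_k(\mu)=\sum_{j=1}^{n}\prod_{i=0}^{j-1}\frac{1}{|1+h\mu_{(k+i)\bmod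 n}|},$$ (e.g. $S_0(\mu)=\frac{1}{|1+h\mu_0|}+\frac{1}{|1+h\mu_0||1+h\mu_1|}+\dots+\frac{1}{|1+h\mu_0|\cdots|1+h\mu_{n-1}|}$), and, when $0<|e_\mu(nh)|\neq1$, $$K_0(\mu)=\frac{h|e_\mu(nh)|}{\bigl|1-|e_\mu(nh)|\bigr|}\max\{S_0(\mu),\dots,S_{n-1}(\mu)\}.$$ Here $-\lambda$ denotes the $n$-cycle with values $-\lambda_0,\dots,-\lambda_{n-1}$. Hyers–Ulam stability: an equation $\mathcal{L}[y](t)=f(t)$, $t\in\mathbb{T}$ (with $\mathcal{L}$ a linear difference operator) has Hyers–Ulam stability on $\mathbb{T}$ with Hyers–Ulam stability constant $K>0$ if for every $\varepsilon>0$ and every $\xi:\mathbb{T}\to\mathbb{R}$ with $|\mathcal{L}[\xi](t)-f(t)|\le\varepsilon$ for all $t\in\mathbb{T}$, there is a solution $y:\mathbb{T}\to\mathbb{R}$ of the equation with $|\xi(t)-y(t)|\le K\varepsilon$ for all $t\in\mathbb{T}$. The minimum Hyers–Ulam stability constant is the smallest such $K$. *)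

From Stdlib Require Import Reals Lra Lia List.
Open Scope R_scope.

(* The time scale T = {0, h, 2h, ...} is indexed by k : nat, t = k*h.
   A function x : T -> R is represented as x : nat -> R with x k = x(kh). *)

Definition dlt (h : R) (x : nat -> R) : nat -> R :=
  fun k => (x (S k) - x k) / h.

Definition is_ncycle (n : nat) (mu : nat -> R) : Prop :=
  (0 < n)%nat /\
  (forall k, mu k = mu (k mod n)%nat) /\
  (forall m, (0 < m < n)%nat -> ~ (forall k, mu (k + m)%nat = mu k)).

Definition negc (mu : nat -> R) : nat -> R := fun k => - mu k.

(* e_μ(t) = prod_{k=0}^{t/h - 1} (1 + h μ(kh)), evaluated at t = m h *)
Fixpoint dexp (h : R) (mu : nat -> R) (m : nat) : R :=
  match m with
  | O => 1
  | S m' => dexp h mu m' * (1 + h * mu m')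
  end.

Fixpoint Sprod (h : R) (n : nat) (mu : nat -> R) (k j : nat) : R :=
  match j with
  | O => 1
  | S j' => Sprod h n mu k j' * / Rabs (1 + h * mu ((k + j') mod n)%nat)
  end.

Definition Sk (h : R) (n : nat) (mu : nat -> R) (k : nat) : R :=
  fold_right Rplus 0 (map (fun j => Sprod h n mu k (S j)) (seq 0 n)).

Definition maxS (h : R) (n : nat) (mu : nat -> R) : R :=
  fold_right Rmax (Sk h n mu 0) (map (Sk h n mu) (seq 0 n)).

Definition K0 (h : R) (n : nat) (mu : nat -> R) : R :=
  h * Rabs (dexp h mu n) / Rabs (1 - Rabs (dexp h mu n)) * maxS h n mu.

Definition HU_stable (Lop : (nat -> R) -> nat -> R) (f : nat -> R) (K : R) : Prop :=
  0 < K /\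
  forall eps : R, 0 < eps ->
  forall xi : nat -> R,
    (forall k, Rabs (Lop xi k - f k) <= eps) ->
    exists y : nat -> R,
      (forall k, Lop y k = f k) /\
      (forall k, Rabs (xi k - y k) <= K * eps).

Definition Lop2 (h : R) (lam : nat -> R) (y : nat -> R) : nat -> R :=
  fun k => dlt h (dlt h y) k + (dlt h lam k - lam k * lam (S k)) * y k.

(* The operator factors as  Lop2 y = (Δ - λ^σ)(Δ + λ) y  with λ^σ(t) = λ(t+h),
   so the theorem reduces to the first-order equation  Δz = μ z + g  for an
   n-periodic μ with 1 + hμ ≠ 0, applied first with μ = λ^σ and then with
   μ = -λ.  For the first-order equation, the defect w = ξ - z of an
   ε-approximate solution ξ solves  w(k+1) = (1 + hμ_k) w(k) + r_k  with
   |r_k| ≤ hε.  Writing p = |e_μ(nh)| and V_k = p S_k(μ) / |1 - p|, the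
   cyclic sums satisfy  |1 + hμ_k| S_k = 1 + S_{k+1} - 1/p, hence
   |1 + hμ_k| V_k + 1 = V_{k+1} if p < 1 and |1 + hμ_k| V_k = 1 + V_{k+1}
   if p > 1.  In the first case the recurrence started at w(0) = 0 stays
   below hε V_k; in the second the backward series solution does.  Since
   S_k ≤ max S, this gives the constant K_0(μ), and composing the two
   first-order steps gives K_0(λ) K_0(-λ). *)

From Stdlib Require Import Reals Lra Lia List.
From Coquelicot Require Import Coquelicot.
Open Scope R_scope.

Definition sumL (F : nat -> R) (n : nat) : R := fold_right Rplus 0 (map F (seq 0 n)).

Lemma sumL_S_front (F : nat -> R) (n : nat) : sumL F (S n) = F O + sumL (fun j => F (S j)) n.
Proof. unfold sumL; simpl. rewrite <- seq_shift, map_map. reflexivity. Qed.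

Lemma sumL_S_back (F : nat -> R) (n : nat) : sumL F (S n) = sumL F n + F n.
Proof.
  revert F; induction n as [|n IH]; intro F.
  - unfold sumL; simpl; ring.
  - rewrite (sumL_S_front F (S n)), IH, (sumL_S_front F n). ring.
Qed.

Lemma sumL_ext (F G : nat -> R) (n : nat) : (forall j, F j = G j) -> sumL F n = sumL G n.
Proof. intro H. unfold sumL. f_equal. apply map_ext. exact H. Qed.

Lemma sumL_scal (c : R) (F : nat -> R) (n : nat) : sumL (fun j => c * F j) n = c * sumL F n.
Proof. induction n as [|n IH]; [unfold sumL; simpl; ring|]. rewrite !sumL_S_back, IH. ring. Qed.

Lemma sumL_nonneg (F : nat -> R) (n : nat) : (forall j, 0 <= F j) -> 0 <= sumL F n.
Proof. intro H. induction n as [|n IH]; [unfold sumL; simpl; lra|]. rewrite sumL_S_back. specialize (H n). lra. Qed.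

Definition mod_periodic (n : nat) (mu : nat -> R) : Prop := forall k, mu k = mu (k mod n)%nat.

Lemma mod_periodic_add (n : nat) (mu : nat -> R) :
  (0 < n)%nat -> mod_periodic n mu -> forall k, mu (k + n)%nat = mu k.
Proof.
  intros Hn Hm k. rewrite (Hm (k + n)%nat), (Hm k). f_equal.
  replace (k + n)%nat with (k + 1 * n)%nat by lia. apply Nat.Div0.mod_add.
Qed.

Lemma mod_periodic_shift (n : nat) (mu : nat -> R) :
  mod_periodic n mu -> mod_periodic n (fun i => mu (S i)).
Proof.
  intros Hm k. rewrite (Hm (S k)), (Hm (S (k mod n))). f_equal.
  replace (S k) with (1 + k)%nat by lia. replace (S (k mod n)) with (1 + k mod n)%nat by lia.
  symmetry. apply Nat.Div0.add_mod_idemp_r.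
Qed.

Lemma mod_periodic_negc (n : nat) (mu : nat -> R) : mod_periodic n mu -> mod_periodic n (negc mu).
Proof. intros Hm k. unfold negc. rewrite <- Hm. reflexivity. Qed.

Definition factor (h : R) (mu : nat -> R) (i : nat) : R := Rabs (1 + h * mu i).

(* absprod h μ k j = |1 + hμ_k| ⋯ |1 + hμ_{k+j-1}|, so that |e_μ(mh)| = absprod h μ 0 m
   and the terms of S_k(μ) are the reciprocals 1 / absprod h μ k j. *)
Fixpoint absprod (h : R) (mu : nat -> R) (k j : nat) : R :=
  match j with
  | O => 1
  | S j' => absprod h mu k j' * factor h mu (k + j')
  end.

Lemma dexp_abs (h : R) (mu : nat -> R) (m : nat) : Rabs (dexp h mu m) = absprod h mu 0 m.
Proof. induction m as [|m IH]; simpl; [apply Rabs_R1|]. rewrite Rabs_mult, IH. reflexivity. Qed.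

Lemma absprod_shift_fun (h : R) (mu : nat -> R) (k j : nat) :
  absprod h (fun i => mu (S i)) k j = absprod h mu (S k) j.
Proof. induction j as [|j IH]; simpl; [reflexivity|]. rewrite IH. reflexivity. Qed.

Lemma absprod_front (h : R) (mu : nat -> R) (k j : nat) :
  absprod h mu k (S j) = factor h mu k * absprod h mu (S k) j.
Proof.
  induction j as [|j IH]; [simpl; rewrite Nat.add_0_r; ring|].
  change (absprod h mu k (S (S j))) with (absprod h mu k (S j) * factor h mu (k + S j)).
  rewrite IH. simpl. rewrite Nat.add_succ_r. ring.
Qed.

Section Products.
Variables (h : R) (mu : nat -> R).
Hypothesis factor_nz : forall i, 1 + h * mu i <> 0.

Lemma factor_pos (i : nat) : 0 < factor h mu i.
Proof. apply Rabs_pos_lt, factor_nz. Qed.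

Lemma absprod_pos (k j : nat) : 0 < absprod h mu k j.
Proof.
  induction j as [|j IH]; simpl; [lra|].
  apply Rmult_lt_0_compat; [exact IH | apply factor_pos].
Qed.

Variable n : nat.
Hypothesis n_pos : (0 < n)%nat.
Hypothesis mu_mod : mod_periodic n mu.

Lemma absprod_period (k : nat) : absprod h mu k n = absprod h mu 0 n.
Proof.
  induction k as [|k IH]; [reflexivity|]. rewrite <- IH.
  assert (Hfront := absprod_front h mu k n).
  change (absprod h mu k (S n)) with (absprod h mu k n * factor h mu (k + n)) in Hfront.
  unfold factor at 1 in Hfront. rewrite (mod_periodic_add n mu n_pos mu_mod) in Hfront.
  fold (factor h mu k) in Hfront. pose proof (factor_pos k).
  apply (Rmult_eq_reg_l (factor h mu k)); lra.
Qed.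

Lemma Sk_absprod (k : nat) : Sk h n mu k = sumL (fun j => / absprod h mu k (S j)) n.
Proof.
  apply sumL_ext. intro j. generalize (S j); clear j. intro j.
  induction j as [|j IH]; simpl; [now rewrite Rinv_1|].
  rewrite IH, Rinv_mult, <- mu_mod. reflexivity.
Qed.

Lemma Sk_recursion (k : nat) :
  factor h mu k * Sk h n mu k = 1 + Sk h n mu (S k) - / absprod h mu 0 n.
Proof.
  rewrite !Sk_absprod, <- sumL_scal, <- (absprod_period (S k)).
  rewrite (sumL_ext _ (fun j => / absprod h mu (S k) j)).
  2: { intro j. rewrite absprod_front, Rinv_mult, <- Rmult_assoc, Rinv_r, Rmult_1_l; [reflexivity|].
    apply Rgt_not_eq, factor_pos. }
  destruct n as [|m]; [lia|].
  rewrite sumL_S_front, (sumL_S_back (fun j => / absprod h mu (S k) (S j))).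
  simpl (absprod h mu (S k) 0). rewrite Rinv_1. ring.
Qed.

Lemma Sk_pos (k : nat) : 0 < Sk h n mu k.
Proof.
  rewrite Sk_absprod. destruct n as [|m]; [lia|]. rewrite sumL_S_back.
  assert (0 <= sumL (fun j => / absprod h mu k (S j)) m).
  { apply sumL_nonneg. intro j. apply Rlt_le, Rinv_0_lt_compat, absprod_pos. }
  pose proof (Rinv_0_lt_compat _ (absprod_pos k (S m))). lra.
Qed.

End Products.

(* S_k(μ) only depends on k mod n, which is why max S bounds every S_k. *)
Lemma Sprod_mod (h : R) (n : nat) (mu : nat -> R) (k j : nat) :
  Sprod h n mu k j = Sprod h n mu (k mod n) j.
Proof.
  induction j as [|j IH]; simpl; [reflexivity|].
  rewrite IH, Nat.Div0.add_mod_idemp_l. reflexivity.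
Qed.

Lemma fold_Rmax_ge (F : nat -> R) (init : R) (l : list nat) (x : nat) :
  In x l -> F x <= fold_right Rmax init (map F l).
Proof.
  induction l as [|y l IH]; simpl; [tauto|]. intros [<-|Hin]; [apply Rmax_l|].
  eapply Rle_trans; [apply IH, Hin | apply Rmax_r].
Qed.

Lemma Sk_le_maxS (h : R) (n : nat) (mu : nat -> R) (k : nat) :
  (0 < n)%nat -> Sk h n mu k <= maxS h n mu.
Proof.
  intro Hn.
  replace (Sk h n mu k) with (Sk h n mu (k mod n)).
  2: { apply sumL_ext. intro j. symmetry. apply Sprod_mod. }
  apply fold_Rmax_ge, in_seq. pose proof (Nat.mod_upper_bound k n). lia.
Qed.

Lemma Sk_shift (h : R) (n : nat) (mu : nat -> R) (k : nat) :
  mod_periodic n mu -> Sk h n (fun i => mu (S i)) k = Sk h n mu (S k).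
Proof.
  intro Hm. rewrite (Sk_absprod h _ n (mod_periodic_shift n mu Hm)), (Sk_absprod h mu n Hm).
  apply sumL_ext. intro j. rewrite absprod_shift_fun. reflexivity.
Qed.

Lemma forward_solution (a r V : nat -> R) (delta : R) :
  0 <= V O -> (forall k, Rabs (r k) <= delta) ->
  (forall k, Rabs (a k) * V k + 1 <= V (S k)) ->
  exists w : nat -> R, (forall k, w (S k) = a k * w k + r k) /\
    (forall k, Rabs (w k) <= delta * V k).
Proof.
  intros HV0 Hr HV.
  assert (Hdelta : 0 <= delta) by (pose proof (Rabs_pos (r O)); specialize (Hr O); lra).
  exists (fix w k := match k with O => 0 | S k' => a k' * w k' + r k' end).
  split; [reflexivity|].
  induction k as [|k IH].
  - rewrite Rabs_R0. apply Rmult_le_pos; assumption.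
  - set (w := fix w k := match k with O => 0 | S k' => a k' * w k' + r k' end) in *.
    change (w (S k)) with (a k * w k + r k).
    eapply Rle_trans; [apply Rabs_triang|]. rewrite Rabs_mult.
    pose proof (Rmult_le_compat_l _ _ _ (Rabs_pos (a k)) IH).
    pose proof (Rmult_le_compat_l _ _ _ Hdelta (HV k)). specialize (Hr k). nra.
Qed.

Lemma sum_n_front (u : nat -> R) (N : nat) :
  sum_n u (S N) = u O + sum_n (fun m => u (S m)) N.
Proof.
  induction N as [|N IH]; [rewrite sum_Sn, !sum_O; reflexivity|].
  rewrite sum_Sn, IH, sum_Sn. unfold plus; simpl. ring.
Qed.

Lemma nonneg_series_bounded (u : nat -> R) (B : R) :
  (forall m, 0 <= u m) -> (forall N, sum_n u N <= B) -> ex_series u /\ Series u <= B.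
Proof.
  intros Hu HB.
  assert (Hlim : ex_finite_lim_seq (sum_n u)).
  { apply ex_finite_lim_seq_incr with B; [|exact HB].
    intro N. rewrite sum_Sn. unfold plus; simpl. specialize (Hu (S N)). lra. }
  assert (Hs : is_series u (Lim_seq (sum_n u))) by exact (Lim_seq_correct' _ Hlim).
  split; [eexists; exact Hs|].
  rewrite (is_series_unique _ _ Hs).
  exact (is_lim_seq_le _ _ _ _ HB (Lim_seq_correct' _ Hlim) (is_lim_seq_const B)).
Qed.

(* tail_term a r k m = r_{k+m} / (a_k ⋯ a_{k+m}), the m-th term of the backward
   expansion w(k) = - Σ_m r_{k+m} / (a_k ⋯ a_{k+m}). *)
Fixpoint tail_term (a r : nat -> R) (k m : nat) : R :=
  match m with
  | O => r k / a k
  | S m' => tail_term a r (S k) m' / a k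
  end.

Lemma backward_solution (a r V : nat -> R) (delta : R) :
  (forall k, a k <> 0) -> (forall k, 0 <= V k) -> (forall k, Rabs (r k) <= delta) ->
  (forall k, 1 + V (S k) <= Rabs (a k) * V k) ->
  exists w : nat -> R, (forall k, w (S k) = a k * w k + r k) /\
    (forall k, Rabs (w k) <= delta * V k).
Proof.
  intros Ha HV0 Hr HV.
  assert (Hdelta : 0 <= delta) by (pose proof (Rabs_pos (r O)); specialize (Hr O); lra).
  set (c := tail_term a r).
  assert (Hdiv : forall k x, Rabs (x / a k) = Rabs x / Rabs (a k)).
  { intros k x. unfold Rdiv. rewrite Rabs_mult, Rabs_inv. reflexivity. }
  assert (Hpartial : forall N k, sum_n (fun m => Rabs (c k m)) N <= delta * V k).
  { induction N as [|N IH]; intro k; pose proof (Rabs_pos_lt _ (Ha k));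
      apply (Rmult_le_reg_l (Rabs (a k))); auto.
    - rewrite sum_O. unfold c; simpl. rewrite Hdiv.
      replace (Rabs (a k) * (Rabs (r k) / Rabs (a k))) with (Rabs (r k)) by (field; lra).
      pose proof (Rmult_le_compat_l _ _ _ Hdelta (HV k)).
      pose proof (Rmult_le_pos _ _ Hdelta (HV0 (S k))). specialize (Hr k). nra.
    - rewrite sum_n_front. unfold c at 1; simpl (tail_term a r k 0). rewrite Hdiv.
      assert (Hshift : sum_n (fun m => Rabs (c k (S m))) N
                       = / Rabs (a k) * sum_n (fun m => Rabs (c (S k) m)) N).
      { symmetry; erewrite <- (sum_n_mult_l (K := R_Ring)); apply sum_n_ext. intro m.
        unfold c, mult; simpl. rewrite Hdiv. apply Rmult_comm. }
      rewrite Hshift.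
      replace (Rabs (a k) * (Rabs (r k) / Rabs (a k) + / Rabs (a k) * sum_n (fun m => Rabs (c (S k) m)) N))
        with (Rabs (r k) + sum_n (fun m => Rabs (c (S k) m)) N) by (field; lra).
      pose proof (Rmult_le_compat_l _ _ _ Hdelta (HV k)). specialize (IH (S k)). specialize (Hr k). nra. }
  assert (Hseries : forall k, ex_series (fun m => Rabs (c k m)) /\
                             Series (fun m => Rabs (c k m)) <= delta * V k).
  { intro k. apply nonneg_series_bounded; [intro; apply Rabs_pos | intro N; apply Hpartial]. }
  exists (fun k => - Series (c k)). split.
  - intro k. destruct (Hseries k) as [Hex _].
    rewrite (Series_incr_1 (c k)) by (apply ex_series_Rabs; exact Hex).
    rewrite (Series_ext (fun m => c k (S m)) (fun m => / a k * c (S k) m))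
      by (intro m; unfold c; simpl; unfold Rdiv; apply Rmult_comm).
    rewrite Series_scal_l. unfold c; simpl. field. apply Ha.
  - intro k. destruct (Hseries k) as [Hex Hle]. rewrite Rabs_Ropp.
    eapply Rle_trans; [apply Series_Rabs, Hex | exact Hle].
Qed.

Lemma periodic_solution (h : R) (n : nat) (mu r : nat -> R) (delta : R) :
  (0 < n)%nat -> mod_periodic n mu -> (forall k, 1 + h * mu k <> 0) ->
  absprod h mu 0 n <> 1 -> (forall k, Rabs (r k) <= delta) ->
  exists w : nat -> R, (forall k, w (S k) = (1 + h * mu k) * w k + r k) /\
    (forall k, Rabs (w k) <= delta *
       (absprod h mu 0 n * Sk h n mu k / Rabs (1 - absprod h mu 0 n))).
Proof.
  intros Hn Hm Hnz Hp1 Hr.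
  set (p := absprod h mu 0 n) in *.
  set (V := fun k => p * Sk h n mu k / Rabs (1 - p)).
  assert (Hp : 0 < p) by apply absprod_pos, Hnz.
  assert (Hq : 0 < Rabs (1 - p)) by (apply Rabs_pos_lt; intro; apply Hp1; lra).
  assert (HV0 : forall k, 0 <= V k).
  { intro k. pose proof (Sk_pos h mu Hnz n Hn Hm k). unfold V.
    apply Rmult_le_pos; [nra | apply Rlt_le, Rinv_0_lt_compat, Hq]. }
  assert (HVrec : forall k, factor h mu k * V k = V (S k) - (1 - p) / Rabs (1 - p)).
  { intro k. unfold V.
    replace (factor h mu k * (p * Sk h n mu k / Rabs (1 - p)))
      with (p * (factor h mu k * Sk h n mu k) / Rabs (1 - p)) by (field; lra).
    rewrite Sk_recursion by assumption. fold p. field. lra. }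
  destruct (Rlt_or_le p 1) as [Hlt|Hge].
  - rewrite Rabs_pos_eq, Rdiv_diag in HVrec by lra.
    apply (forward_solution _ _ V); [apply HV0 | exact Hr |].
    intro k. specialize (HVrec k). unfold factor in HVrec. lra.
  - rewrite Rabs_left1 in HVrec by lra.
    replace ((1 - p) / - (1 - p)) with (-1) in HVrec by (field; lra).
    apply (backward_solution _ _ V); [exact Hnz | exact HV0 | exact Hr |].
    intro k. specialize (HVrec k). unfold factor in HVrec. lra.
Qed.

Definition Kbound (h : R) (n : nat) (mu : nat -> R) (M : R) : R :=
  h * Rabs (dexp h mu n) / Rabs (1 - Rabs (dexp h mu n)) * M.

Lemma first_order_stability (h : R) (n : nat) (mu g x : nat -> R) (eps M : R) :
  0 < h -> (0 < n)%nat -> mod_periodic n mu -> (forall k, 1 + h * mu k <> 0) ->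
  Rabs (dexp h mu n) <> 1 -> (forall k, Sk h n mu k <= M) ->
  (forall k, Rabs (dlt h x k - mu k * x k - g k) <= eps) ->
  exists z : nat -> R, (forall k, dlt h z k = mu k * z k + g k) /\
    (forall k, Rabs (x k - z k) <= Kbound h n mu M * eps).
Proof.
  intros Hh Hn Hm Hnz Hp1 HM Hx.
  unfold Kbound. rewrite dexp_abs in *. set (p := absprod h mu 0 n) in *.
  set (r := fun k => x (S k) - (1 + h * mu k) * x k - h * g k).
  assert (Hr : forall k, Rabs (r k) <= h * eps).
  { intro k. replace (r k) with (h * (dlt h x k - mu k * x k - g k)) by (unfold r, dlt; field; lra).
    rewrite Rabs_mult, (Rabs_pos_eq h) by lra. apply Rmult_le_compat_l; [lra | apply Hx]. }
  destruct (periodic_solution h n mu r (h * eps) Hn Hm Hnz Hp1 Hr) as [w [Hw Hwb]].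
  exists (fun k => x k - w k). split.
  - intro k. unfold dlt. rewrite Hw. unfold r. field. lra.
  - intro k. replace (x k - (x k - w k)) with (w k) by ring.
    eapply Rle_trans; [apply Hwb|]. fold p.
    assert (Hp : 0 < p) by apply absprod_pos, Hnz.
    assert (Hq : 0 < Rabs (1 - p)) by (apply Rabs_pos_lt; intro; apply Hp1; lra).
    assert (Heps : 0 <= eps) by (pose proof (Rabs_pos (r O)); specialize (Hr O); nra).
    replace (h * eps * (p * Sk h n mu k / Rabs (1 - p)))
      with ((h * p / Rabs (1 - p) * eps) * Sk h n mu k) by (field; lra).
    replace (h * p / Rabs (1 - p) * M * eps) with ((h * p / Rabs (1 - p) * eps) * M) by ring.
    apply Rmult_le_compat_l; [|apply HM].
    apply Rmult_le_pos; [|exact Heps]. apply Rmult_le_pos; [nra|]. apply Rlt_le, Rinv_0_lt_compat, Hq.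
Qed.

Lemma K0_pos (h : R) (n : nat) (mu : nat -> R) :
  0 < h -> (0 < n)%nat -> mod_periodic n mu -> (forall k, 1 + h * mu k <> 0) ->
  Rabs (dexp h mu n) <> 1 -> 0 < K0 h n mu.
Proof.
  intros Hh Hn Hm Hnz Hp1. unfold K0. rewrite dexp_abs in *.
  pose proof (absprod_pos h mu Hnz 0 n).
  pose proof (Sk_pos h mu Hnz n Hn Hm 0). pose proof (Sk_le_maxS h n mu 0 Hn).
  assert (0 < Rabs (1 - absprod h mu 0 n)) by (apply Rabs_pos_lt; intro; apply Hp1; lra).
  apply Rmult_lt_0_compat; [|lra]. apply Rmult_lt_0_compat; [nra|]. apply Rinv_0_lt_compat; assumption.
Qed.

Lemma dexp_shift_abs (h : R) (n : nat) (mu : nat -> R) :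
  (0 < n)%nat -> mod_periodic n mu -> (forall k, 1 + h * mu k <> 0) ->
  Rabs (dexp h (fun i => mu (S i)) n) = Rabs (dexp h mu n).
Proof.
  intros Hn Hm Hnz. rewrite !dexp_abs, absprod_shift_fun. apply absprod_period; assumption.
Qed.

Lemma cycle_factors_nonzero (h : R) (n : nat) (lam : nat -> R) :
  0 < h -> (0 < n)%nat -> mod_periodic n lam ->
  (forall k, (k < n)%nat -> lam k <> 1 / h /\ lam k <> - (1 / h)) ->
  forall k, 1 + h * lam k <> 0 /\ 1 + h * negc lam k <> 0.
Proof.
  intros Hh Hn Hm Hl k. unfold negc. rewrite Hm.
  destruct (Hl (k mod n)%nat (Nat.mod_upper_bound k n ltac:(lia))) as [Hplus Hminus].
  split; intro E; [apply Hminus | apply Hplus]; apply (Rmult_eq_reg_l h); try lra;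
    field_simplify; lra.
Qed.

Lemma Lop2_factorization (h : R) (lam y : nat -> R) (k : nat) :
  h <> 0 ->
  Lop2 h lam y k = dlt h (fun j => dlt h y j + lam j * y j) k
                   - lam (S k) * (dlt h y k + lam k * y k).
Proof. intro Hh. unfold Lop2, dlt. field. exact Hh. Qed.

Theorem theorem3p4 (h : R) (n : nat) (lam f : nat -> R) :
  0 < h ->
  is_ncycle n lam ->
  (forall k, (k < n)%nat -> lam k <> 1 / h /\ lam k <> - (1 / h)) ->
  0 < Rabs (dexp h lam n) -> Rabs (dexp h lam n) <> 1 ->
  0 < Rabs (dexp h (negc lam) n) -> Rabs (dexp h (negc lam) n) <> 1 ->
  HU_stable (Lop2 h lam) f (K0 h n lam * K0 h n (negc lam)).
Proof.
  intros Hh [Hn [Hm _]] Hl _ Hp1 _ Hq1.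
  assert (Hnz := cycle_factors_nonzero h n lam Hh Hn Hm Hl).
  assert (HmS := mod_periodic_shift n lam Hm).
  assert (Hmneg := mod_periodic_negc n lam Hm).
  split.
  { apply Rmult_lt_0_compat; apply K0_pos; try assumption; apply Hnz. }
  intros eps _ xi Hxi.
  set (u := fun k => dlt h xi k + lam k * xi k).
  (* first factor:  Δu - λ^σ u = Lop2 ξ  is approximately f *)
  destruct (first_order_stability h n (fun k => lam (S k)) f u eps (maxS h n lam))
    as [v [Hv Huv]]; try assumption.
  { intro k. apply Hnz. }
  { rewrite dexp_shift_abs by (try assumption; apply Hnz). exact Hp1. }
  { intro k. rewrite Sk_shift by assumption. apply Sk_le_maxS, Hn. }
  { intro k. unfold u. rewrite <- (Lop2_factorization h lam xi k) by lra. apply Hxi. }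
  unfold Kbound in Huv. rewrite dexp_shift_abs in Huv by (try assumption; apply Hnz).
  (* second factor:  Δξ + λξ = u  is approximately v *)
  destruct (first_order_stability h n (negc lam) v xi (K0 h n lam * eps) (maxS h n (negc lam)))
    as [y [Hy Hxy]]; try assumption.
  { intro k. apply Hnz. }
  { intro k. apply Sk_le_maxS, Hn. }
  { intro k. replace (dlt h xi k - negc lam k * xi k - v k) with (u k - v k)
      by (unfold u, negc; ring). apply Huv. }
  exists y. split.
  - assert (Huy : forall j, dlt h y j + lam j * y j = v j).
    { intro j. rewrite Hy. unfold negc. ring. }
    intro k. rewrite Lop2_factorization, Huy by lra.
    unfold dlt at 1. rewrite !Huy. fold (dlt h v k). rewrite Hv. ring.
  - intro k. eapply Rle_trans; [apply Hxy | right; unfold Kbound, K0; ring].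
Qed.
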